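(* If $R$ is a weak symmetric ring, then $R$ is NJ-symmetric.
   Context: Rings are associative with identity. $N(R)$ is the set of nilpotent elements, $J(R)$ the Jacobson radical. $R$ is weak symmetric if for all $a,b,c\in R$, $abc\in N(R)$ implies $acb\in N(R)$. $R$ is NJ-symmetric if for all $a,b,c\in R$, $abc\in N(R)$ implies $bac\in J(R)$. *)

From HB Require Import structures.
From mathcomp Require Import all_boot all_algebra.
Set Implicit Arguments. Unset Strict Implicit. Unset Printing Implicit Defensive.
Import GRing.Theory.
Local Open Scope ring_scope.

(* Rings: associative with identity (possibly the zero ring): pzRingType. *)

Definition nilpotent_el (R : pzRingType) (a : R) : Prop := exists n : nat, a ^+ n = 0.

Definition left_ideal (R : pzRingType) (I : R -> Prop) : Prop :=
  [/\ I 0, (forall x y, I x -> I y -> I (x + y)) & (forall r x, I x -> I (r * x))].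

Definition maximal_left_ideal (R : pzRingType) (M : R -> Prop) : Prop :=
  [/\ left_ideal M, ~ M 1 &
      forall K : R -> Prop, left_ideal K -> ~ K 1 -> (forall x, M x -> K x) ->
        forall x, K x -> M x].

Definition jacobson (R : pzRingType) (x : R) : Prop :=
  forall M : R -> Prop, maximal_left_ideal M -> M x.

Definition weak_symmetric (R : pzRingType) : Prop :=
  forall a b c : R, nilpotent_el (a * b * c) -> nilpotent_el (a * c * b).

Definition NJ_symmetric (R : pzRingType) : Prop :=
  forall a b c : R, nilpotent_el (a * b * c) -> jacobson (b * a * c).

From mathcomp Require Import all_boot all_algebra.
From Stdlib Require Import Classical.
Import GRing.Theory.
Local Open Scope ring_scope.

(* In a weak symmetric ring the nilpotent elements form a left-multiplicatively
   closed set: pushing factors around cyclically and swapping them turns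
   [r^k x^k] into [(rx)^k] up to nilpotency.  If [abc] is nilpotent then so are
   [bca] and [bac], hence every [r bac], so every [1 - r bac] is left invertible
   and [bac] lies in each maximal left ideal [M], because otherwise [M + R bac]
   would contain [1]. *)

Lemma nilpotent_mulC (R : pzRingType) (u v : R) :
  nilpotent_el (u * v) -> nilpotent_el (v * u).
Proof.
case=> n uv_n; exists n.+1.
have vuE k : (v * u) ^+ k.+1 = v * (u * v) ^+ k * u.
  elim: k => [|k IHk]; first by rewrite expr1 expr0 mulr1.
  by rewrite exprS IHk !mulrA exprS !mulrA.
by rewrite vuE uv_n mulr0 mul0r.
Qed.

Lemma nilpotent_of_expr (R : pzRingType) (y : R) n :
  nilpotent_el (y ^+ n) -> nilpotent_el y.
Proof. by case=> m ynm; exists (n * m)%N; rewrite exprM. Qed.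

Lemma nilpotent_left_unit_subr (R : pzRingType) (y : R) :
  nilpotent_el y -> exists u, u * (1 - y) = 1.
Proof.
case=> n yn; exists (\sum_(i < n) y ^+ i).
suff -> m : (\sum_(i < m) y ^+ i) * (1 - y) = 1 - y ^+ m by rewrite yn subr0.
elim: m => [|m IHm]; first by rewrite big_ord0 mul0r expr0 subrr.
by rewrite big_ord_recr /= mulrDl IHm mulrBr mulr1 -exprSr addrA subrK.
Qed.

Section LeftIdealSum.
Variable R : pzRingType.

Definition add_left_principal (M : R -> Prop) (x : R) (z : R) : Prop :=
  exists m r, M m /\ z = m + r * x.

Lemma left_ideal_add_left_principal (M : R -> Prop) (x : R) :
  left_ideal M -> left_ideal (add_left_principal M x).
Proof.
case=> M0 MD MM; split.
- by exists 0, 0; rewrite mul0r addr0.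
- move=> _ _ [m1 [r1 [Mm1 ->]]] [m2 [r2 [Mm2 ->]]].
  by exists (m1 + m2), (r1 + r2); rewrite mulrDl addrACA; split; first exact: MD.
- move=> r _ [m [s [Mm ->]]].
  by exists (r * m), (r * s); rewrite mulrDr mulrA; split; first exact: MM.
Qed.

Lemma jacobson_of_left_quasi_regular (x : R) :
  (forall r, exists u, u * (1 - r * x) = 1) -> jacobson x.
Proof.
move=> qreg M [Mideal M1 Mmax]; have [M0 _ MM] := Mideal.
have Kideal := @left_ideal_add_left_principal M x Mideal.
have [[m [r [Mm E]]] | K1] := classic (add_left_principal M x 1).
  have [u urx] := qreg r.
  have : M (u * (1 - r * x)) by rewrite E addrK; exact: MM.
  by rewrite urx.
apply: (Mmax _ Kideal K1).
  by move=> y My; exists y, 0; rewrite mul0r addr0.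
by exists 0, 1; rewrite mul1r add0r.
Qed.

End LeftIdealSum.

Section WeakSymmetric.
Variable R : pzRingType.
Hypothesis wsR : weak_symmetric R.

Lemma nilpotent_exprMn (r x : R) k (w : R) :
  nilpotent_el (r ^+ k * x ^+ k * w) -> nilpotent_el ((r * x) ^+ k * w).
Proof.
elim: k w => [|k IHk] w; first by rewrite !expr0 mul1r.
move=> rxw; rewrite exprS exprSr in rxw.
have rxk_rxw : nilpotent_el (r ^+ k * x ^+ k * (r * x * w)).
  have : nilpotent_el (r ^+ k * x ^+ k * (x * w) * r).
    by apply: nilpotent_mulC; move: rxw; rewrite !mulrA.
  by move/wsR; rewrite !mulrA.
by rewrite exprSr -mulrA; exact: IHk.
Qed.

Lemma nilpotent_mull (r x : R) : nilpotent_el x -> nilpotent_el (r * x).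
Proof.
case=> n xn; apply: (@nilpotent_of_expr _ _ n).
have := @nilpotent_exprMn r x n 1; rewrite !mulr1; apply.
by exists 1%N; rewrite expr1 xn mulr0.
Qed.

End WeakSymmetric.

Theorem theorem2p11 (R : pzRingType) : weak_symmetric R -> NJ_symmetric R.
Proof.
move=> wsR a b c abc_nil.
have bac_nil : nilpotent_el (b * a * c).
  by apply: wsR; apply: nilpotent_mulC; rewrite mulrA.
apply: jacobson_of_left_quasi_regular => r.
exact/nilpotent_left_unit_subr/nilpotent_mull.
Qed.
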